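(* Let $n\ge1$ and let $\mathbb X$, $\mathbb Y$ be disjoint sets of variables with $|\mathbb X|=|\mathbb Y|=k>n$. Then the homotopy category of finitely generated graded matrix factorizations $\mathrm{HMF}(\mathrm{Sym}(\mathbb X|\mathbb Y),\Sigma\mathbb X^{n+1}-\Sigma\mathbb Y^{n+1})$ is trivial (every object is isomorphic to $0$).
   Context: $\mathrm{Sym}(\mathbb X|\mathbb Y)$ is the ring of complex polynomials in $\mathbb X\cup\mathbb Y$ symmetric in $\mathbb X$ and in $\mathbb Y$ separately, i.e. the polynomial ring in the elementary symmetric polynomials $X_1,\dots,X_k,Y_1,\dots,Y_k$, graded with variables of positive degree; $\Sigma\mathbb X^{n+1}=\sum_{x\in\mathbb X}x^{n+1}$. For a regular local graded ring $S$ and homogeneous $w$ of degree $d>0$ in the homogeneous maximal ideal, a graded matrix factorization of type $(S,w)$ is $M^0\xrightarrow fM^{-1}\xrightarrow gM^0$ with $M^0,M^{-1}$ finitely generated free graded modules, $f$ of degree $d$, $g$ of degree $0$, $gf=fg=w$; $\mathrm{HMF}(S,w)$ is the category of these modulo homotopy (null-homotopies $D^0:M^0\to N^{-1}$ of degree $0$, $D^{-1}:M^{-1}\to N^0$ of degree $-d$ with $g'D^0+D^{-1}f=\alpha$, $f'D^{-1}+D^0g=\beta$). *)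

From mathcomp Require Import all_boot all_algebra.
From mathcomp Require Import complex.
From mathcomp Require Import Rstruct.
From mathcomp Require Import mpoly.
Set Implicit Arguments. Unset Strict Implicit. Unset Printing Implicit Defensive.
Import GRing.Theory.
Local Open Scope ring_scope.

Definition CC : fieldType := (Rdefinitions.R)[i].

(* Used twice:
   - as Sym(X|Y) = C[X_1..X_k, Y_1..Y_k] (X_{i+1} = 'X_(lshift k i),
     Y_{i+1} = 'X_(rshift k i)), the polynomial ring in the elementary
     symmetric polynomials;
   - as C[x_1..x_k, y_1..y_k], the ring of the actual variables of X and Y. *)
Definition Pol (k : nat) := {mpoly CC[k + k]}.

(* Grading of Sym(X|Y): deg x = deg y = 2, hence deg X_j = deg Y_j = 2j. *)
Definition wt (k : nat) (j : 'I_(k + k)) : nat :=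
  match split j with inl i => 2 * i.+1 | inr i => 2 * i.+1 end.

Definition wdeg (k : nat) (m : 'X_{1.. k + k}) : nat :=
  \sum_(j < k + k) wt j * m j.

(* p is homogeneous of degree e (0 is homogeneous of every degree). *)
Definition whomog (k : nat) (e : int) (p : Pol k) : bool :=
  all (fun m => (wdeg m)%:Z == e) (msupp p).

Definition eX (k j : nat) : Pol k :=
  \sum_(h : {set 'I_k} | #|h| == j) \prod_(i in h) 'X_(lshift k i).
Definition eY (k j : nat) : Pol k :=
  \sum_(h : {set 'I_k} | #|h| == j) \prod_(i in h) 'X_(rshift k i).

Definition esym_tuple (k : nat) : (k + k).-tuple (Pol k) :=
  [tuple match split j with inl i => eX k i.+1 | inr i => eY k i.+1 end
   | j < k + k].

Definition psum_diff (k m : nat) : Pol k :=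
  \sum_(i < k) 'X_(lshift k i) ^+ m - \sum_(i < k) 'X_(rshift k i) ^+ m.

(* finitely generated free graded module  (+)_j S(-gdeg j):
   generator j has degree gdeg j. *)
Record gfree := GFree { grk : nat; gdeg : 'I_grk -> int }.

(* a matrix A : M -> N (acting on column vectors) is a graded homomorphism
   of degree e *)
Definition hom_of_deg (k : nat) (e : int) (M N : gfree)
  (A : 'M[Pol k]_(grk N, grk M)) : Prop :=
  forall (i : 'I_(grk N)) (j : 'I_(grk M)), whomog (gdeg j + e - gdeg i) (A i j).

Arguments hom_of_deg {k} e M N A.

(* graded matrix factorizations M^0 --f--> M^{-1} --g--> M^0 of type (S, w),
   w of degree d *)
Record gmf (k : nat) (w : Pol k) (d : int) := GMF {
  mf0 : gfree;
  mf1 : gfree;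
  mf_f : 'M[Pol k]_(grk mf1, grk mf0);
  mf_g : 'M[Pol k]_(grk mf0, grk mf1);
  mf_f_deg : hom_of_deg d mf0 mf1 mf_f;
  mf_g_deg : hom_of_deg 0 mf1 mf0 mf_g;
  mf_gf : mf_g *m mf_f = w%:M;
  mf_fg : mf_f *m mf_g = w%:M }.

Definition is_mf_mor (k : nat) (w : Pol k) (d : int) (M N : gmf w d)
  (a : 'M[Pol k]_(grk (mf0 N), grk (mf0 M)))
  (b : 'M[Pol k]_(grk (mf1 N), grk (mf1 M))) : Prop :=
  [/\ hom_of_deg 0 (mf0 M) (mf0 N) a, hom_of_deg 0 (mf1 M) (mf1 N) b,
      mf_f N *m a = b *m mf_f M & mf_g N *m b = a *m mf_g M].

Arguments is_mf_mor {k w d} M N a b.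

Definition mf_homotopic (k : nat) (w : Pol k) (d : int) (M N : gmf w d)
  (a a' : 'M[Pol k]_(grk (mf0 N), grk (mf0 M)))
  (b b' : 'M[Pol k]_(grk (mf1 N), grk (mf1 M))) : Prop :=
  exists (D0 : 'M[Pol k]_(grk (mf1 N), grk (mf0 M)))
         (D1 : 'M[Pol k]_(grk (mf0 N), grk (mf1 M))),
  [/\ hom_of_deg 0 (mf0 M) (mf1 N) D0, hom_of_deg (- d) (mf1 M) (mf0 N) D1,
      a - a' = mf_g N *m D0 + D1 *m mf_f M &
      b - b' = mf_f N *m D1 + D0 *m mf_g M].

Arguments mf_homotopic {k w d} M N a a' b b'.

Definition hmf_iso (k : nat) (w : Pol k) (d : int) (M N : gmf w d) : Prop :=
  exists a b a' b',
  [/\ is_mf_mor M N a b, is_mf_mor N M a' b',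
      mf_homotopic M M (a' *m a) 1%:M (b' *m b) 1%:M &
      mf_homotopic N N (a *m a') 1%:M (b *m b') 1%:M].

Arguments hmf_iso {k w d} M N.

Definition gfree0 : gfree := GFree (fun _ : 'I_0 => 0%:Z).

Lemma hom_of_deg0 (k : nat) (e : int) (A : 'M[Pol k]_(0, 0)) :
  hom_of_deg e gfree0 gfree0 A.
Proof. by move=> [] //. Qed.

Lemma mx00_eq (k : nat) (A B : 'M[Pol k]_(0, 0)) : A = B.
Proof. by apply/matrixP => -[]. Qed.

Definition gmf0 (k : nat) (w : Pol k) (d : int) : gmf w d :=
  @GMF k w d gfree0 gfree0 0 0 (hom_of_deg0 _ _) (hom_of_deg0 _ _)
    (mx00_eq _ _) (mx00_eq _ _).

From Pilot Require Import Defs.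
From mathcomp Require Import all_boot all_algebra.
From mathcomp Require Import complex Rstruct mpoly zify.
Set Implicit Arguments. Unset Strict Implicit. Unset Printing Implicit Defensive.
Import GRing.Theory.
Local Open Scope ring_scope.

(* If M is nonzero, the relations gf = fg = w force w to be homogeneous of
   degree 2(n+1), the weight of the variable X_(n+1) of Sym(X|Y).  Then the
   partial derivative of w along X_(n+1) is a constant a, and a is nonzero:
   at the point where x runs through the (n+1)-st roots of unity padded by
   zeros and y = 0, every generator except X_(n+1) vanishes (e_j(x) = 0 for
   j <> n+1, since x is the root set of X^k - X^(k-n-1)), so w evaluates to
   a e_(n+1)(x), while the power-sum difference evaluates to n+1.
   Differentiating gf = w, fg = w then gives g f' + g' f = f g' + f' g = a,
   so the pair -(f'/a, g'/a) is a null-homotopy of the identity of M. *)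

Lemma split_lshift m n (i : 'I_m) : split (lshift n i) = inl i.
Proof. by rewrite -[lshift n i]/(unsplit (inl i)) unsplitK. Qed.

Lemma split_rshift m n (i : 'I_n) : split (rshift m i) = inr i.
Proof. by rewrite -[rshift m i]/(unsplit (inr i)) unsplitK. Qed.

Section WeightedHomogeneity.
Variable k : nat.
Implicit Types (p q w : Pol k) (m : 'X_{1.. k + k}) (i j : 'I_(k + k)).

Lemma wt_gt0 i : (0 < wt i)%N.
Proof. by rewrite /wt; case: split. Qed.

Lemma wdegD m1 m2 : wdeg (m1 + m2)%MM = (wdeg m1 + wdeg m2)%N.
Proof. by rewrite /wdeg -big_split; apply: eq_bigr => j _; rewrite mnmDE mulnDr. Qed.

Lemma wdegU i : wdeg U_(i)%MM = wt i.
Proof.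
rewrite /wdeg (bigD1 i) //= mnm1E eqxx muln1 big1 ?addn0 // => j /negbTE.
by rewrite mnm1E eq_sym => ->; rewrite muln0.
Qed.

Lemma wdeg_eq0 m : wdeg m = 0%N -> m = 0%MM.
Proof.
move/eqP; rewrite /wdeg sum_nat_eq0 => /forallP m0; apply/mnmP => j.
move: (m0 j); rewrite /= muln_eq0 mnm0E -[wt j == 0%N]negbK -lt0n wt_gt0.
exact: eqP.
Qed.

Lemma wdeg_eq_wt m i :
  wdeg m = wt i -> (forall j, j != i -> m j = 0%N) -> m = U_(i)%MM.
Proof.
move=> mi supp_m.
have wt_mi : (wt i * m i = wt i * 1)%N.
  rewrite muln1 -[RHS]mi /wdeg (bigD1 i) //= big1 ?addn0 // => j /supp_m ->.
  exact: muln0.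
apply/mnmP => j; rewrite mnm1E; have [<-|ji] := eqVneq i j.
  by apply/eqP; rewrite -(eqn_pmul2l (wt_gt0 i)) wt_mi.
by rewrite supp_m // eq_sym.
Qed.

Lemma whomogP e p :
  reflect (forall m, p@_m != 0 -> (wdeg m)%:Z = e) (whomog e p).
Proof.
apply: (iffP allP) => hp m.
- by move=> pm; apply/eqP/hp; rewrite mcoeff_msupp.
- by move=> pm; apply/eqP/hp; rewrite -mcoeff_msupp.
Qed.

Lemma whomog0 e : whomog e (0 : Pol k).
Proof. by apply/whomogP => m; rewrite mcoeff0 eqxx. Qed.

Lemma whomogD e p q : whomog e p -> whomog e q -> whomog e (p + q).
Proof.
move=> /whomogP hp /whomogP hq; apply/whomogP => m; rewrite mcoeffD.
by have [->|/hp //] := eqVneq p@_m 0; rewrite add0r => /hq.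
Qed.

Lemma whomog_sum e (I : Type) (r : seq I) (P : pred I) (F : I -> Pol k) :
  (forall x, P x -> whomog e (F x)) -> whomog e (\sum_(x <- r | P x) F x).
Proof.
by move=> hF; apply: (big_ind (whomog e)) => //; [exact: whomog0 | exact: whomogD].
Qed.

Lemma whomogM e1 e2 p q :
  whomog e1 p -> whomog e2 q -> whomog (e1 + e2) (p * q).
Proof.
move=> /allP hp /allP hq; apply/allP => m /msuppM_le/allpairsP[[m1 m2] [/= h1 h2 ->]].
by rewrite wdegD PoszD; move: (hp _ h1) (hq _ h2) => /eqP -> /eqP ->.
Qed.

Lemma whomogCM e c p : whomog e p -> whomog e (c%:MP * p).
Proof.
move=> /whomogP hp; apply/whomogP => m; rewrite mcoeffCM.
by have [->|/hp //] := eqVneq p@_m 0; rewrite mulr0 eqxx.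
Qed.

Lemma whomog_mderiv e i p :
  whomog e p -> whomog (e - (wt i)%:Z) (mderiv i p).
Proof.
move=> /whomogP hp; apply/whomogP => m; rewrite mcoeff_mderiv.
have [->|/hp] := eqVneq p@_(m + U_(i)) 0; first by rewrite mul0rn eqxx.
by rewrite wdegD wdegU PoszD => <- _; rewrite addrK.
Qed.

Lemma mderiv_whomog_wt i w : whomog (wt i) w -> mderiv i w = (w@_U_(i))%:MP.
Proof.
move=> /whomogP hw; apply/mpolyP => m; rewrite mcoeff_mderiv mcoeffC.
have [->|m_neq0] := eqVneq m 0%MM; first by rewrite add0m mnm0E mulr1.
rewrite mulr0; have [->|/hw] := eqVneq w@_(m + U_(i)) 0; first by rewrite mul0rn.
rewrite wdegD wdegU => -[] /eqP; rewrite -{2}[wt i]add0n eqn_add2r => /eqP/wdeg_eq0.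
by move/eqP: m_neq0.
Qed.

(* Any monomial of weight wt i other than X_i contains a variable at which v
   vanishes. *)
Lemma meval_whomog_wt i w (v : 'I_(k + k) -> CC) :
  whomog (wt i) w -> (forall j, j != i -> v j = 0) -> w.@[v] = w@_U_(i) * v i.
Proof.
move=> /whomogP hw v0.
have term0 m : m \in msupp w -> m != U_(i)%MM -> \prod_j v j ^+ m j = 0.
  rewrite mcoeff_msupp => /hw [wm] m_neqU.
  have [j /andP[ji mj]|supp_m] := pickP (fun j => (j != i) && (m j != 0%N)).
    by rewrite (bigD1 j) //= v0 // expr0n (negbTE mj) mul0r.
  suff: m = U_(i)%MM by move/eqP: m_neqU.
  apply: wdeg_eq_wt => // j ji.
  by move: (supp_m j) => /=; rewrite ji => /negbFE/eqP.
rewrite mevalE; have [Uw|Uw] := boolP (U_(i)%MM \in msupp w).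
  rewrite (bigD1_seq _ Uw (msupp_uniq w)) /= [X in _ + X]big1_seq ?addr0.
    rewrite (bigD1 i) //= mnm1E eqxx expr1 big1 ?mulr1 // => j ji.
    by rewrite mnm1E eq_sym (negbTE ji).
  by move=> m /andP[m_neqU mw]; rewrite term0 ?mulr0.
rewrite (memN_msupp_eq0 Uw) mul0r big1_seq // => m /= mw.
by rewrite term0 ?mulr0 //; apply: contraNneq Uw => <-.
Qed.

End WeightedHomogeneity.

Section MatrixFactorizations.
Variables (k : nat) (w : Pol k) (d : int).

Lemma map_mx_mderivM (i : 'I_(k + k)) p q r
    (A : 'M[Pol k]_(p, q)) (B : 'M_(q, r)) :
  map_mx (mderiv i) (A *m B) = map_mx (mderiv i) A *m B + A *m map_mx (mderiv i) B.
Proof.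
apply/matrixP => x y; rewrite !mxE raddf_sum -big_split.
by apply: eq_bigr => z _; rewrite !mxE; exact: mderivM.
Qed.

Lemma mx_factor_mderiv (i : 'I_(k + k)) p q (A : 'M[Pol k]_(p, q)) (B : 'M_(q, p)) :
  B *m A = w%:M ->
  B *m map_mx (mderiv i) A + map_mx (mderiv i) B *m A = (mderiv i w)%:M.
Proof.
move=> BA; rewrite addrC -map_mx_mderivM BA.
by apply/matrixP => x y; rewrite !mxE mderivMn.
Qed.

Lemma hom_of_deg_mderiv (i : 'I_(k + k)) e (M N : gfree)
    (A : 'M[Pol k]_(grk N, grk M)) (c : CC) :
  hom_of_deg e M N A ->
  hom_of_deg (e - (wt i)%:Z) M N (c%:MP *: map_mx (mderiv i) A).
Proof.
move=> hA x y; rewrite !mxE; apply: whomogCM.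
by rewrite addrA [_ - _ - gdeg x]addrAC; apply/whomog_mderiv/hA.
Qed.

Lemma whomog_mx_factor (P Q : gfree) e1 e2
    (A : 'M[Pol k]_(grk Q, grk P)) (B : 'M_(grk P, grk Q)) :
  hom_of_deg e1 P Q A -> hom_of_deg e2 Q P B -> B *m A = w%:M ->
  (0 < grk P)%N -> whomog (e1 + e2) w.
Proof.
move=> hA hB BA P_gt0; pose x := Ordinal P_gt0.
move/matrixP: BA => /(_ x x); rewrite !mxE eqxx mulr1n => <-.
apply: whomog_sum => l _; have := whomogM (hB x l) (hA l x).
by rewrite (_ : _ + _ = e1 + e2) //; lia.
Qed.

Lemma gmf_whomog (M : gmf w d) :
  ((0 < grk (Defs.mf0 M)) || (0 < grk (Defs.mf1 M)))%N -> whomog d w.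
Proof.
have f_deg := @mf_f_deg _ _ _ M; have g_deg := @mf_g_deg _ _ _ M.
case/orP => [rk0|rk1].
- by rewrite -[d]addr0; exact: whomog_mx_factor f_deg g_deg (mf_gf M) rk0.
- by rewrite -[d]add0r; exact: whomog_mx_factor g_deg f_deg (mf_fg M) rk1.
Qed.

Lemma hmf_iso0 (M : gmf w d) :
  mf_homotopic M M 0 1%:M 0 1%:M -> hmf_iso M (gmf0 w d).
Proof.
move=> id0; exists 0, 0, 0, 0; split.
- by split; [case | case | rewrite mulmx0 mul0mx ..].
- by split; [move=> ? [] | move=> ? [] | rewrite mulmx0 mul0mx ..].
- by rewrite !mulmx0.
- by exists 0, 0; split; [case | case | exact: mx00_eq ..].
Qed.

Lemma mx_nrows0_eq (R : Type) p q (A B : 'M[R]_(p, q)) : p = 0%N -> A = B.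
Proof. by move=> p0; apply/matrixP => x; have := ltn_ord x; rewrite {2}p0. Qed.

Lemma null_homotopic_rank0 (M : gmf w d) :
  grk (Defs.mf0 M) = 0%N -> grk (Defs.mf1 M) = 0%N ->
  mf_homotopic M M 0 1%:M 0 1%:M.
Proof.
move=> rk0 rk1; exists 0, 0.
by split; try exact: mx_nrows0_eq; move=> ? ?; rewrite mxE; exact: whomog0.
Qed.

Lemma null_homotopic_mderiv (M : gmf w d) (i : 'I_(k + k)) (a : CC) :
  d = (wt i)%:Z -> a != 0 -> mderiv i w = a%:MP ->
  mf_homotopic M M 0 1%:M 0 1%:M.
Proof.
move=> d_wt a_neq0 dw; pose c := - a^-1.
pose D p q (A : 'M[Pol k]_(p, q)) := c%:MP *: map_mx (mderiv i) A.
have DA p q (A : 'M_(p, q)) B : B *m A = w%:M -> B *m D _ _ A + D _ _ B *m A = - 1%:M.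
  move/(mx_factor_mderiv i); rewrite -scalemxAr -scalemxAl -scalerDr => ->.
  by rewrite dw scale_scalar_mx -mpolyCM mulNr mulVf // mpolyCN raddfN.
exists (D _ _ (mf_f M)), (D _ _ (mf_g M)); split.
- have := hom_of_deg_mderiv i c (@mf_f_deg _ _ _ M).
  by rewrite [d - _](_ : _ = 0) // d_wt subrr.
- have := hom_of_deg_mderiv i c (@mf_g_deg _ _ _ M).
  by rewrite [0 - _](_ : _ = - d) // d_wt sub0r.
- by rewrite sub0r DA ?mf_gf.
- by rewrite sub0r DA ?mf_fg.
Qed.

End MatrixFactorizations.

Lemma meval_eX k (v : 'I_(k + k) -> CC) j :
  (eX k j).@[v] = (mesym k CC j).@[fun i => v (lshift k i)].
Proof.
rewrite /eX /mesym !rmorph_sum; apply: eq_bigr => h _.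
by rewrite !rmorph_prod; apply: eq_bigr => i _ /=; rewrite !mevalXU.
Qed.

Lemma meval_eY_eq0 k (v : 'I_(k + k) -> CC) j :
  (forall i, v (rshift k i) = 0) -> (eY k j.+1).@[v] = 0.
Proof.
move=> v0; rewrite /eY rmorph_sum big1 // => h /eqP card_h.
have /card_gt0P[i hi] : (0 < #|h|)%N by rewrite card_h.
by rewrite rmorph_prod (bigD1 i) //= mevalXU v0 mul0r.
Qed.

Lemma meval_mesym_eq0 (R : idomainType) k (cs : k.-tuple R) j : (j <= k)%N ->
  (\prod_(c <- cs) ('X - c%:P))`_(k - j) = 0 -> (mesym k R j).@[tnth cs] = 0.
Proof.
rewrite -ltnS => jk; have := mroots_coeff cs (Ordinal jk); rewrite /= => -> /eqP.
by rewrite mulf_eq0 signr_eq0 => /eqP.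
Qed.

Lemma roots_of_unity_exist n :
  exists rs : seq CC, size rs = n.+1 /\ \prod_(z <- rs) ('X - z%:P) = 'X^(n.+1) - 1.
Proof.
have [rs rs_prod] := closed_field_poly_normal ('X^(n.+1) - 1 : {poly CC}).
rewrite lead_coefXnsubC // scale1r in rs_prod.
exists rs; split => //.
by have := size_XnsubC (1 : CC) (ltn0Sn n); rewrite rs_prod size_prod_XsubC => -[].
Qed.

Lemma meval_psum_diff k e (v : 'I_(k + k) -> CC) :
  (psum_diff k e).@[v] = \sum_i v (lshift k i) ^+ e - \sum_i v (rshift k i) ^+ e.
Proof.
by rewrite rmorphB !rmorph_sum; congr (_ - _); apply: eq_bigr => i _ /=;
  rewrite rmorphXn /= mevalXU.
Qed.

Section RootsOfUnityPoint.
Variables (n k : nat) (rs : seq CC).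
Hypotheses (nk : (n < k)%N) (rs_size : size rs = n.+1)
  (rs_prod : \prod_(z <- rs) ('X - z%:P) = 'X^(n.+1) - 1).

Lemma padded_roots_size : size (rs ++ nseq (k - n.+1) 0) == k.
Proof. by rewrite size_cat size_nseq rs_size subnKC. Qed.

Definition padded_roots : k.-tuple CC := Tuple padded_roots_size.

Definition roots_point (j : 'I_(k + k)) : CC :=
  if split j is inl i then tnth padded_roots i else 0.

Lemma prod_padded_roots :
  \prod_(c <- padded_roots) ('X - c%:P) = 'X^k - 'X^(k - n.+1).
Proof.
rewrite big_cat /= rs_prod big_nseq iter_mulr_1 polyC0 subr0 mulrBl mul1r -exprD.
by rewrite subnKC.
Qed.

Lemma meval_esym_roots_point (j : 'I_(k + k)) :
  j != lshift k (Ordinal nk) -> (tnth (esym_tuple k) j).@[roots_point] = 0.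
Proof.
have left_roots : (fun i => roots_point (lshift k i)) =1 tnth padded_roots.
  by move=> i; rewrite /roots_point split_lshift.
rewrite -[j]splitK tnth_mktuple; case: split => i /=; rewrite ?split_lshift ?split_rshift.
  move=> i_neq_n; rewrite meval_eX (meval_eq _ left_roots).
  apply: meval_mesym_eq0 => //; rewrite prod_padded_roots coefB !coefXn.
  have i_n : i != n :> nat by apply: contraNneq i_neq_n => i_n; apply/eqP/val_inj.
  have ik := ltn_ord i.
  have -> : (k - i.+1 == k)%N = false by apply/negbTE; clear -ik; lia.
  have -> : (k - i.+1 == k - n.+1)%N = false.
    by apply/negbTE; clear -ik nk i_n; lia.
  by rewrite subrr.
by move=> _; apply: meval_eY_eq0 => i'; rewrite /roots_point split_rshift.
Qed.

Lemma meval_psum_roots_point : (psum_diff k n.+1).@[roots_point] = n.+1%:R.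
Proof.
have root1 z : z \in rs -> z ^+ n.+1 = 1.
  by rewrite -root_prod_XsubC rs_prod /root !hornerE subr_eq0 => /eqP.
rewrite meval_psum_diff [X in _ - X]big1 => [|i _]; last first.
  by rewrite /roots_point split_rshift expr0n.
under eq_bigr do rewrite /roots_point split_lshift.
rewrite subr0 -(big_tuple _ _ _ xpredT (fun c => c ^+ n.+1)) big_cat /=.
rewrite big_nseq iter_addr_0 expr0n mul0rn addr0 (eq_big_seq (fun=> 1)) //.
by rewrite -rs_size -sum1_size natr_sum.
Qed.

Lemma mcoeff_esym_preimage_neq0 (w : Pol k) :
  w \mPo esym_tuple k = psum_diff k n.+1 ->
  whomog (wt (lshift k (Ordinal nk))) w -> w@_U_(lshift k (Ordinal nk)) != 0.
Proof.
move=> /(congr1 (meval roots_point)) w_esym w_hom; apply/eqP => w0.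
move: w_esym; rewrite comp_mpoly_meval meval_psum_roots_point.
rewrite (meval_whomog_wt w_hom) ?w0 ?mul0r; last exact: meval_esym_roots_point.
by move/eqP; rewrite eq_sym Num.Theory.pnatr_eq0.
Qed.

End RootsOfUnityPoint.

Theorem proposition3p4p5 (n k : nat) (hn : (1 <= n)%N) (hnk : (n < k)%N)
  (w : Pol k) (hw : w \mPo esym_tuple k = psum_diff k n.+1)
  (M : gmf w (2 * n.+1)%:Z) :
  hmf_iso M (gmf0 w (2 * n.+1)%:Z).
Proof.
pose j := lshift k (Ordinal hnk).
have d_wt : (2 * n.+1)%:Z = (wt j)%:Z by rewrite /wt split_lshift.
apply: hmf_iso0.
have [/andP[/eqP rk0 /eqP rk1]|M_neq0] :=
  boolP ((grk (Defs.mf0 M) == 0) && (grk (Defs.mf1 M) == 0))%N.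
  exact: null_homotopic_rank0.
have w_hom : whomog (wt j) w.
  by rewrite -d_wt; apply: (gmf_whomog (M := M)); rewrite !lt0n -negb_and.
have [rs [rs_size rs_prod]] := roots_of_unity_exist n.
have a_neq0 := mcoeff_esym_preimage_neq0 rs_size rs_prod hw w_hom.
exact: null_homotopic_mderiv d_wt a_neq0 (mderiv_whomog_wt w_hom).
Qed.
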